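(* Let $b>0$, $\sigma>0$. Let $A\subseteq\mathbb{R}$ be a closed set with smallest element $\theta_*$, and let $c:A\to\mathbb{R}$ be nondecreasing and left-continuous with $c(\theta_* )=0$, $c(x)>0$ for $x\in A$, $x>\theta_*$, and, if $A$ is unbounded, $\inf\{c(x)/x: x\in A,x\ge y\}\uparrow\infty$ as $y\uparrow\infty$. Let $\phi(y)=\sup_{x\in A}\{yx-c(x)\}$ for $y\ge0$; for $p>0$ let $\phi_*(p)=-\inf\{\phi(y):y\in[0,p]\}$ and $F(\gamma,p)=\int_0^p\frac{du}{\phi(u)+\gamma}$ for $\gamma\in(\phi_*(p),\infty)$. Then for each $p>0$ there exists a unique $\gamma(p)\in(\phi_*(p),\infty)$ such that $\tfrac12\sigma^2F(\gamma(p),p)=b$.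
   Context: Under the assumptions, $\phi$ is finite, convex and continuous on $[0,\infty)$, so $\phi_*(p)$ is finite. *)

From Stdlib Require Import Reals.
From Coquelicot Require Import Coquelicot.
Open Scope R_scope.

(* phi(y) = sup_{x in A} { y x - c(x) }  (finite under the standing assumptions) *)
Definition phi (A : R -> Prop) (c : R -> R) (y : R) : R :=
  real (Lub_Rbar (fun z => exists x, A x /\ z = y * x - c x)).

Definition phistar (A : R -> Prop) (c : R -> R) (p : R) : R :=
  - real (Glb_Rbar (fun z => exists y, 0 <= y <= p /\ z = phi A c y)).

Definition Ffun (A : R -> Prop) (c : R -> R) (gamma p : R) : R :=
  RInt (fun u => / (phi A c u + gamma)) 0 p.

Definition left_continuous_on (A : R -> Prop) (c : R -> R) : Prop :=
  forall x, A x -> forall eps, 0 < eps -> exists delta, 0 < delta /\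
    forall z, A z -> x - delta < z <= x -> Rabs (c z - c x) < eps.

(* Superlinear growth of c means that for slopes y in [0, p] only the points x <= K of A
   compete in phi(y) = sup (y x - c x), so phi is finite and K-Lipschitz on [0, p] and attains
   its minimum -phi_*(p) at some u0.  On (phi_*(p), oo), gamma |-> F(gamma, p) is continuous
   and strictly decreasing, is at most p / (gamma - phi_*(p)), and blows up as gamma decreases
   to phi_*(p): with eps = gamma - phi_*(p), phi(u) + gamma <= eps + K |u - u0| and the
   integral is at least of order ln(1/eps) / K.  The intermediate value theorem gives gamma(p). *)

From Stdlib Require Import Reals Rtopology Ranalysis5 Lra Classical.
From Coquelicot Require Import Coquelicot.
Open Scope R_scope.

Lemma continuity_pt_lipschitz_at (f : R -> R) x0 r L :
  0 < r -> 0 <= L ->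
  (forall x, Rabs (x - x0) < r -> Rabs (f x - f x0) <= L * Rabs (x - x0)) ->
  continuity_pt f x0.
Proof.
  intros Hr HL Hf eps Heps.
  exists (Rmin r (eps / (L + 1))); split.
  - apply Rmin_pos; [lra | apply Rdiv_lt_0_compat; lra].
  - intros x [_ Hx]; simpl in *; unfold R_dist in *.
    apply Rmin_Rgt in Hx as [Hxr Hxe].
    pose proof (Rabs_pos (x - x0)).
    apply Rle_lt_trans with ((L + 1) * Rabs (x - x0)); [specialize (Hf x Hxr); nra |].
    apply Rmult_lt_compat_l with (r := L + 1) in Hxe; [| lra].
    unfold Rdiv in Hxe; rewrite <- Rmult_assoc, Rinv_r_simpl_m in Hxe; lra.
Qed.

Lemma is_RInt_inv_affine (alpha beta a b : R) :
  beta <> 0 -> a <= b -> (forall u, a <= u <= b -> 0 < alpha + beta * u) ->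
  is_RInt (fun u => / (alpha + beta * u)) a b
    ((ln (alpha + beta * b) - ln (alpha + beta * a)) / beta).
Proof.
  intros Hbeta Hab Hpos.
  replace ((ln (alpha + beta * b) - ln (alpha + beta * a)) / beta)
    with (minus (ln (alpha + beta * b) / beta) (ln (alpha + beta * a) / beta))
    by (unfold minus, plus, opp; simpl; field; exact Hbeta).
  apply (is_RInt_derive (V := R_CompleteNormedModule) (fun u => ln (alpha + beta * u) / beta));
    intros x Hx; rewrite Rmin_left, Rmax_right in Hx by exact Hab;
    specialize (Hpos x Hx).
  - auto_derive; [lra | field; lra].
  - apply (ex_derive_continuous (V := R_NormedModule)); auto_derive; lra.
Qed.

Lemma ln_quotient_le_RInt_inv (h : R -> R) (alpha beta a b : R) :
  beta <> 0 -> a <= b -> ex_RInt (fun u => / h u) a b ->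
  (forall u, a <= u <= b -> 0 < h u <= alpha + beta * u) ->
  (ln (alpha + beta * b) - ln (alpha + beta * a)) / beta <= RInt (fun u => / h u) a b.
Proof.
  intros Hbeta Hab Hh Hle.
  assert (Hpos : forall u, a <= u <= b -> 0 < alpha + beta * u)
    by (intros u Hu; specialize (Hle u Hu); lra).
  pose proof (is_RInt_inv_affine alpha beta a b Hbeta Hab Hpos) as Haff.
  rewrite <- (is_RInt_unique _ _ _ _ Haff).
  apply RInt_le; [exact Hab | eexists; exact Haff | exact Hh |].
  intros u Hu. apply Rinv_le_contravar; apply Hle; lra.
Qed.

Definition inv_integral (g : R -> R) (gam p : R) : R := RInt (fun u => / (g u + gam)) 0 p.

Section InvIntegral.

Variables (g : R -> R) (m p K u0 : R).
Hypothesis p_pos : 0 < p.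
Hypothesis K_pos : 0 < K.
Hypothesis g_lipschitz : forall u v, Rabs (g u - g v) <= K * Rabs (u - v).
Hypothesis g_ge : forall u, m <= g u.
Hypothesis u0_in : 0 <= u0 <= p.
Hypothesis g_u0 : g u0 = m.

Lemma continuous_inv_shift gam x : - m < gam -> continuous (fun u => / (g u + gam)) x.
Proof.
  intros Hgam. apply continuous_Rinv_comp; [| specialize (g_ge x); lra].
  apply (continuous_plus g (fun _ => gam)); [| apply continuous_const].
  apply continuity_pt_filterlim, (continuity_pt_lipschitz_at _ _ 1 K); [lra | lra |].
  intros y _. apply g_lipschitz.
Qed.

Lemma ex_RInt_inv_shift gam a b : - m < gam -> ex_RInt (fun u => / (g u + gam)) a b.
Proof.
  intros Hgam. apply (ex_RInt_continuous (V := R_CompleteNormedModule)).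
  intros x _. now apply continuous_inv_shift.
Qed.

Lemma inv_integral_decreasing g1 g2 :
  - m < g1 -> g1 < g2 -> inv_integral g g2 p < inv_integral g g1 p.
Proof.
  intros Hg1 Hg12. apply RInt_lt; [exact p_pos | | |].
  1, 2: intros x _; apply continuous_inv_shift; lra.
  intros x _. specialize (g_ge x). apply Rinv_lt_contravar; nra.
Qed.

Lemma inv_integral_le gam : - m < gam -> inv_integral g gam p <= p / (m + gam).
Proof.
  intros Hgam. unfold inv_integral.
  apply Rle_trans with (RInt (fun _ => / (m + gam)) 0 p).
  - apply RInt_le; [lra | now apply ex_RInt_inv_shift | apply ex_RInt_const |].
    intros x _. specialize (g_ge x). apply Rinv_le_contravar; lra.
  - rewrite RInt_const. unfold scal; simpl; unfold mult; simpl. unfold Rdiv. lra.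
Qed.

Lemma inv_integral_lipschitz g1 a b : - m < g1 -> g1 <= a -> g1 <= b ->
  Rabs (inv_integral g a p - inv_integral g b p) <= p / (m + g1) ^ 2 * Rabs (a - b).
Proof.
  intros Hg1 Ha Hb. unfold inv_integral.
  change (RInt (fun u => / (g u + a)) 0 p - RInt (fun u => / (g u + b)) 0 p)
    with (minus (RInt (fun u => / (g u + a)) 0 p) (RInt (fun u => / (g u + b)) 0 p)).
  rewrite <- RInt_minus by (apply ex_RInt_inv_shift; lra).
  replace (p / (m + g1) ^ 2 * Rabs (a - b)) with ((p - 0) * (Rabs (a - b) / (m + g1) ^ 2))
    by (field; lra).
  apply abs_RInt_le_const; [lra | apply ex_RInt_minus; apply ex_RInt_inv_shift; lra |].
  intros t _. unfold minus, plus, opp; simpl. specialize (g_ge t).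
  replace (/ (g t + a) + - / (g t + b)) with ((b - a) / ((g t + a) * (g t + b))) by (field; lra).
  unfold Rdiv. rewrite Rabs_mult, Rabs_minus_sym, Rabs_inv, (Rabs_pos_eq (_ * _)) by nra.
  apply Rmult_le_compat_l; [apply Rabs_pos |].
  apply Rinv_le_contravar; [nra |]. simpl. rewrite Rmult_1_r.
  apply Rmult_le_compat; lra.
Qed.

Lemma inv_integral_continuous gam : - m < gam -> continuity_pt (fun x => inv_integral g x p) gam.
Proof.
  intros Hgam. set (r := (m + gam) / 2).
  apply (continuity_pt_lipschitz_at _ _ r (p / (m + (gam - r)) ^ 2)); [unfold r; lra | |].
  - apply Rlt_le, Rdiv_lt_0_compat; [lra | apply pow_lt; unfold r; lra].
  - intros x Hx. apply Rabs_def2 in Hx.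
    apply inv_integral_lipschitz; unfold r in *; lra.
Qed.

(* Near its minimum, [g + gam] is at most [eps + K |u - u0|] with [eps = m + gam], whose
   reciprocal has integral of order [ln (1/eps) / K]. *)
Lemma inv_integral_unbounded N : exists gam, - m < gam /\ N <= inv_integral g gam p.
Proof.
  set (eps := K * p * exp (- (K * N))).
  assert (eps_pos : 0 < eps) by (apply Rmult_lt_0_compat; [nra | apply exp_pos]).
  assert (ln_eps : ln eps = ln (K * p) - K * N)
    by (unfold eps; rewrite ln_mult, ln_exp by (try apply exp_pos; nra); ring).
  clearbody eps.
  exists (eps - m); split; [lra |].
  assert (Hle : forall u, 0 < g u + (eps - m) <= eps + K * Rabs (u - u0)).
  { intros u. specialize (g_ge u). specialize (g_lipschitz u u0).
    rewrite g_u0 in g_lipschitz. apply Rabs_le_between' in g_lipschitz. lra. }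
  assert (Hleft : (ln (eps + K * u0) - ln eps) / K
                  <= RInt (fun u => / (g u + (eps - m))) 0 u0).
  { replace ((ln (eps + K * u0) - ln eps) / K)
      with ((ln ((eps + K * u0) + - K * u0) - ln ((eps + K * u0) + - K * 0)) / - K)
      by (replace (eps + K * u0 + - K * u0) with eps by ring;
          replace (eps + K * u0 + - K * 0) with (eps + K * u0) by ring; field; lra).
    apply (ln_quotient_le_RInt_inv (fun u => g u + (eps - m))); [lra | lra | |].
    - apply ex_RInt_inv_shift; lra.
    - intros u Hu. specialize (Hle u). rewrite Rabs_left1 in Hle by lra. lra. }
  assert (Hright : (ln (eps + K * (p - u0)) - ln eps) / K
                   <= RInt (fun u => / (g u + (eps - m))) u0 p).
  { replace ((ln (eps + K * (p - u0)) - ln eps) / K)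
      with ((ln ((eps - K * u0) + K * p) - ln ((eps - K * u0) + K * u0)) / K)
      by (f_equal; f_equal; f_equal; ring).
    apply (ln_quotient_le_RInt_inv (fun u => g u + (eps - m))); [lra | lra | |].
    - apply ex_RInt_inv_shift; lra.
    - intros u Hu. specialize (Hle u). rewrite Rabs_pos_eq in Hle by lra. lra. }
  (* [(eps + K u0) (eps + K (p - u0)) >= eps (eps + K p) >= eps K p] *)
  assert (Hln : K * N <= ln (eps + K * u0) + ln (eps + K * (p - u0)) - 2 * ln eps).
  { assert (0 <= K * K * (u0 * (p - u0))) by (apply Rmult_le_pos; nra).
    assert (Hprod : ln (eps * (K * p)) <= ln ((eps + K * u0) * (eps + K * (p - u0))))
      by (apply ln_le; [apply Rmult_lt_0_compat |]; nra).
    assert (0 <= K * u0) by nra. assert (0 <= K * (p - u0)) by nra.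
    rewrite (ln_mult eps), (ln_mult (eps + K * u0)) in Hprod
      by (try apply Rmult_lt_0_compat; lra).
    lra. }
  unfold inv_integral. rewrite <- (RInt_Chasles _ 0 u0 p) by (apply ex_RInt_inv_shift; lra).
  unfold plus; simpl.
  apply Rmult_le_reg_l with K; [exact K_pos |].
  apply Rmult_le_compat_l with (r := K) in Hleft, Hright; try lra.
  unfold Rdiv in Hleft, Hright. rewrite <- Rmult_assoc, Rinv_r_simpl_m in Hleft, Hright by lra.
  lra.
Qed.

Lemma inv_integral_level T : 0 < T -> exists! gam, - m < gam /\ inv_integral g gam p = T.
Proof.
  intros HT.
  destruct (inv_integral_unbounded (T + 1)) as (ga & Hga & HFa).
  set (gb := ga + 2 * p / T).
  assert (Hgab : ga < gb)
    by (unfold gb; assert (0 < 2 * p / T) by (apply Rdiv_lt_0_compat; lra); lra).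
  assert (HFb : inv_integral g gb p < T).
  { apply Rle_lt_trans with (p / (m + gb)); [apply inv_integral_le; lra |].
    apply Rlt_div_l; [lra |]. unfold gb.
    replace (T * (m + (ga + 2 * p / T))) with (T * (m + ga) + 2 * p) by (field; lra). nra. }
  destruct (IVT_interv (fun x => T - inv_integral g x p) ga gb) as (gam & Hgam & Hlevel);
    [| exact Hgab | lra | lra |].
  { intros x Hx. apply continuity_pt_minus; [apply continuity_pt_const; intros ? ? ; reflexivity |].
    apply inv_integral_continuous; lra. }
  exists gam; split; [split; lra |].
  intros gam' [Hgam' Hlevel'].
  destruct (Rtotal_order gam gam') as [Hlt | [Heq | Hlt]]; [| exact Heq |].
  - pose proof (inv_integral_decreasing gam gam'); lra.
  - pose proof (inv_integral_decreasing gam' gam); lra.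
Qed.

End InvIntegral.

Lemma real_Lub_Rbar_spec (E : R -> Prop) z0 B :
  E z0 -> (forall z, E z -> z <= B) ->
  (forall z, E z -> z <= real (Lub_Rbar E)) /\
  (forall B', (forall z, E z -> z <= B') -> real (Lub_Rbar E) <= B').
Proof.
  intros Ez0 HB. destruct (Lub_Rbar_correct E) as [Hub Hleast].
  destruct (Lub_Rbar E) as [s | |]; simpl in *.
  - split; [exact Hub |]. intros B' HB'. exact (Hleast (Finite B') HB').
  - exfalso. exact (Hleast (Finite B) HB).
  - exfalso. exact (Hub z0 Ez0).
Qed.

Lemma Glb_Rbar_min (E : R -> Prop) m :
  E m -> (forall z, E z -> m <= z) -> Glb_Rbar E = Finite m.
Proof.
  intros Em Hm. apply is_glb_Rbar_unique. split.
  - intros z Ez. exact (Hm z Ez).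
  - intros l Hl. exact (Hl m Em).
Qed.

Lemma superlinear_tail (A : R -> Prop) (c : R -> R)
  (growth : (~ exists M, forall x, A x -> x <= M) ->
     forall M, exists Y, forall y, Y <= y -> forall x, A x -> y <= x -> M <= c x / x)
  (q B : R) :
  exists K, B <= K /\ forall x, A x -> K < x -> q * x <= c x.
Proof.
  destruct (classic (exists M, forall x, A x -> x <= M)) as [[M HM] | Hunb].
  - exists (Rmax B M); split; [apply Rmax_l |].
    intros x Ax Hx. apply Rmax_Rlt in Hx. specialize (HM x Ax). lra.
  - destruct (growth Hunb q) as [Y HY].
    exists (Rmax (Rmax B Y) 0); split; [apply Rle_trans with (Rmax B Y); apply Rmax_l |].
    intros x Ax Hx. apply Rmax_Rlt in Hx as [Hx Hx0]. apply Rmax_Rlt in Hx as [_ HxY].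
    specialize (HY x ltac:(lra) x Ax (Rle_refl x)).
    apply Rmult_le_compat_r with (r := x) in HY; [| lra].
    unfold Rdiv in HY. rewrite Rmult_assoc, Rinv_l in HY; lra.
Qed.

Definition clamp (p u : R) : R := Rmax 0 (Rmin p u).

Lemma clamp_in p u : 0 <= p -> 0 <= clamp p u <= p.
Proof. intros. unfold clamp, Rmax, Rmin. repeat destruct Rle_dec; lra. Qed.

Lemma clamp_id p u : 0 <= u <= p -> clamp p u = u.
Proof. intros. unfold clamp, Rmax, Rmin. repeat destruct Rle_dec; lra. Qed.

Lemma clamp_lipschitz p u v : Rabs (clamp p u - clamp p v) <= Rabs (u - v).
Proof.
  unfold clamp, Rmax, Rmin. apply Rabs_le.
  destruct (Rle_or_lt 0 (u - v));
    [rewrite (Rabs_pos_eq (u - v)) | rewrite (Rabs_left (u - v))]; try lra;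
    repeat destruct Rle_dec; lra.
Qed.

Section LegendreTransform.

Variables (A : R -> Prop) (c : R -> R) (theta p K : R).
Hypothesis theta_in : A theta.
Hypothesis theta_min : forall x, A x -> theta <= x.
Hypothesis c_nonneg : forall x, A x -> 0 <= c x.
Hypothesis c_theta : c theta = 0.
Hypothesis p_ge0 : 0 <= p.
Hypothesis theta_le_K : Rabs theta <= K.
Hypothesis p_theta_le_K : p * Rabs theta <= K.
Hypothesis c_tail : forall x, A x -> K < x -> (p + 1) * x <= c x.

Lemma tail_term_le x y y' : A x -> K < x -> 0 <= y <= p -> 0 <= y' <= p ->
  y * x - c x <= y' * theta.
Proof.
  intros Ax Hx Hy Hy'. specialize (c_tail x Ax Hx).
  pose proof (Rabs_pos theta). pose proof (Rle_abs (- theta)). rewrite Rabs_Ropp in *.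
  assert (y * x <= p * x) by (apply Rmult_le_compat_r; lra).
  assert (y' * Rabs theta <= p * Rabs theta) by (apply Rmult_le_compat_r; lra).
  nra.
Qed.

Lemma term_le x y : A x -> 0 <= y <= p -> y * x - c x <= (p + 1) * K.
Proof.
  intros Ax Hy. destruct (Rle_or_lt x K) as [Hx | Hx].
  - specialize (c_nonneg x Ax).
    assert (y * x <= y * K) by (apply Rmult_le_compat_l; lra).
    assert (y * K <= p * K) by (apply Rmult_le_compat_r; pose proof (Rabs_pos theta); lra).
    pose proof (Rabs_pos theta). lra.
  - pose proof (tail_term_le x y y Ax Hx Hy Hy).
    pose proof (Rle_abs theta). pose proof (Rabs_pos theta).
    assert (y * theta <= p * Rabs theta) by nra. nra.
Qed.

Lemma phi_ge_term x y : A x -> 0 <= y <= p -> y * x - c x <= phi A c y.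
Proof.
  intros Ax Hy. unfold phi.
  apply (real_Lub_Rbar_spec _ (y * theta - c theta) ((p + 1) * K));
    [now exists theta | | now exists x].
  intros z [x' [Ax' ->]]. now apply term_le.
Qed.

Lemma phi_le y B : 0 <= y <= p -> (forall x, A x -> y * x - c x <= B) -> phi A c y <= B.
Proof.
  intros Hy HB. unfold phi.
  apply (real_Lub_Rbar_spec _ (y * theta - c theta) ((p + 1) * K)); [now exists theta | |].
  - intros z [x [Ax ->]]. now apply term_le.
  - intros z [x [Ax ->]]. now apply HB.
Qed.

(* Only [x <= K] compete in the supremum, and those terms are [K]-Lipschitz in [y]. *)
Lemma phi_le_lipschitz y y' : 0 <= y <= p -> 0 <= y' <= p ->
  phi A c y <= phi A c y' + K * Rabs (y - y').
Proof.
  intros Hy Hy'. apply phi_le; [exact Hy |]. intros x Ax.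
  destruct (Rle_or_lt x K) as [Hx | Hx].
  - pose proof (phi_ge_term x y' Ax Hy'). specialize (theta_min x Ax).
    assert (Rabs x <= K) by (apply Rabs_le; pose proof (Rle_abs (- theta));
      rewrite Rabs_Ropp in *; lra).
    assert ((y - y') * x <= Rabs (y - y') * K).
    { eapply Rle_trans; [apply Rle_abs |]. rewrite Rabs_mult.
      apply Rmult_le_compat_l; [apply Rabs_pos | assumption]. }
    lra.
  - pose proof (tail_term_le x y y' Ax Hx Hy Hy'). pose proof (phi_ge_term theta y' theta_in Hy').
    pose proof (Rabs_pos (y - y')). pose proof (Rabs_pos theta). nra.
Qed.

Lemma phi_clamp_lipschitz u v :
  Rabs (phi A c (clamp p u) - phi A c (clamp p v)) <= K * Rabs (u - v).
Proof.
  pose proof (clamp_in p u p_ge0) as Hu. pose proof (clamp_in p v p_ge0) as Hv.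
  pose proof (phi_le_lipschitz _ _ Hu Hv). pose proof (phi_le_lipschitz _ _ Hv Hu).
  pose proof (clamp_lipschitz p u v) as Hclamp.
  rewrite (Rabs_minus_sym (clamp p v)) in *.
  assert (K * Rabs (clamp p u - clamp p v) <= K * Rabs (u - v))
    by (apply Rmult_le_compat_l; [pose proof (Rabs_pos theta); lra | exact Hclamp]).
  apply Rabs_le. lra.
Qed.

Lemma phi_clamp_min : exists u0, 0 <= u0 <= p /\ forall u, phi A c u0 <= phi A c (clamp p u).
Proof.
  destruct (continuity_ab_min (fun u => phi A c (clamp p u)) 0 p) as (u0 & Hmin & u0_in);
    [exact p_ge0 | |].
  - intros x _. pose proof (Rabs_pos theta).
    apply (continuity_pt_lipschitz_at _ _ 1 K); [lra | lra |].
    intros y _. apply phi_clamp_lipschitz.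
  - exists u0; split; [exact u0_in |]. intros u.
    specialize (Hmin (clamp p u) (clamp_in p u p_ge0)). simpl in Hmin.
    now rewrite !clamp_id in Hmin by (try apply clamp_in; assumption).
Qed.

End LegendreTransform.

Lemma phistar_attained A c p u0 : 0 <= u0 <= p ->
  (forall y, 0 <= y <= p -> phi A c u0 <= phi A c y) -> phistar A c p = - phi A c u0.
Proof.
  intros u0_in Hmin. unfold phistar. rewrite (Glb_Rbar_min _ (phi A c u0)); [reflexivity | |].
  - now exists u0.
  - intros z [y [Hy ->]]. now apply Hmin.
Qed.

Lemma Ffun_clamp A c p gam : 0 <= p ->
  Ffun A c gam p = inv_integral (fun u => phi A c (clamp p u)) gam p.
Proof.
  intros Hp. apply RInt_ext. intros x Hx.
  rewrite Rmin_left, Rmax_right in Hx by exact Hp. now rewrite clamp_id by lra.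
Qed.

Theorem corollary1 (b sigma : R) (A : R -> Prop) (c : R -> R) (theta : R)
  (hb : 0 < b) (hsigma : 0 < sigma)
  (hA_closed : closed_set A)
  (htheta_in : A theta) (htheta_min : forall x, A x -> theta <= x)
  (hc_mono : forall x y, A x -> A y -> x <= y -> c x <= c y)
  (hc_left : left_continuous_on A c)
  (hc_theta : c theta = 0)
  (hc_pos : forall x, A x -> theta < x -> 0 < c x)
  (hc_growth : (~ exists M, forall x, A x -> x <= M) ->
     forall M, exists Y, forall y, Y <= y ->
       forall x, A x -> y <= x -> M <= c x / x) :
  forall p, 0 < p ->
    exists! gamma, phistar A c p < gamma /\
      / 2 * sigma ^ 2 * Ffun A c gamma p = b.
Proof.
  intros p hp.
  assert (c_nonneg : forall x, A x -> 0 <= c x)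
    by (intros x Ax; rewrite <- hc_theta; apply hc_mono; auto).
  destruct (superlinear_tail A c hc_growth (p + 1) (1 + Rabs theta + p * Rabs theta))
    as (K & HK & c_tail).
  assert (0 <= p * Rabs theta) by (apply Rmult_le_pos; [lra | apply Rabs_pos]).
  pose proof (Rabs_pos theta).
  (* extend [phi] from [0, p] to a Lipschitz function on all of [R] *)
  set (g := fun u => phi A c (clamp p u)).
  assert (g_lipschitz : forall u v, Rabs (g u - g v) <= K * Rabs (u - v))
    by (apply (phi_clamp_lipschitz A c theta); auto; lra).
  destruct (phi_clamp_min A c theta p K) as (u0 & u0_in & g_ge); auto; try lra.
  assert (Hstar : phistar A c p = - phi A c u0).
  { apply phistar_attained; [exact u0_in |].
    intros y Hy. rewrite <- (clamp_id p y Hy). apply g_ge. }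
  assert (Hlevel : forall gam, / 2 * sigma ^ 2 * Ffun A c gam p = b <->
                               inv_integral g gam p = 2 * b / sigma ^ 2).
  { assert (0 < sigma ^ 2) by (apply pow_lt; lra).
    intros gam. rewrite Ffun_clamp by lra. fold g.
    split; intros E; [rewrite <- E | rewrite E]; field; lra. }
  destruct (inv_integral_level g (phi A c u0) p K u0 hp ltac:(lra) g_lipschitz g_ge u0_in
              (f_equal (phi A c) (clamp_id p u0 u0_in)) (2 * b / sigma ^ 2))
    as (gam & [Hgam Hval] & Huniq).
  { apply Rdiv_lt_0_compat; [lra | apply pow_lt; lra]. }
  exists gam; split.
  - rewrite Hstar, Hlevel. now split.
  - intros gam' [Hgam' Hval']. rewrite Hstar in Hgam'. rewrite Hlevel in Hval'.
    apply Huniq. now split.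
Qed.
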